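(* Let $(\Omega,\mathcal{F},\mathbf{P})$ be a probability space and $\theta\colon\Omega\to\Omega$ an ergodic automorphism of it. Let $A$ be an $N\times N$ matrix with all entries positive, and let $D(\omega)=\mathrm{diag}(d_1(\omega),\dots,d_N(\omega))$ be measurable in $\omega$ with $d_i(\omega)>0$ for all $i,\omega$ and $\ln^{+}\bigl(\max_i d_i(\cdot)\bigr)\in L_1(\Omega,\mathcal{F},\mathbf{P})$. Put $S(\omega)=AD(\omega)$, $S^{(n)}(\omega)=S(\theta^{n-1}\omega)\cdots S(\theta\omega)S(\omega)$, and let $\lambda$ be the top Lyapunov exponent of $\{S(\omega)\}_{\omega\in\Omega}$. Then there exist $\Omega_0\in\mathcal{F}$ with $\theta(\Omega_0)=\Omega_0$ and $\mathbf{P}(\Omega_0)=1$, a measurable mapping $w=(w_1,\dots,w_N)\colon\Omega_0\to\mathbb{R}^N$ with $w(\omega)$ a positive vector and $\|w(\omega)\|=1$ for all $\omega\in\Omega_0$, and a function $\rho\colon\Omega_0\to(0,\infty)$, such that $S(\omega)w(\omega)=\rho(\omega)w(\theta\omega)$ for all $\omega\in\Omega_0$, and $\lim_{n\to\infty}\frac1n\ln\|S^{(n)}(\omega)w(\omega)\|=\lambda$ for all $\omega\in\Omega_0$.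
   Context: An automorphism $\theta$ is ergodic if every $\theta$-invariant measurable set has probability $0$ or $1$. $\|\cdot\|$ denotes the Euclidean vector or matrix norm. The top Lyapunov exponent of $\{S(\omega)\}$ is the number $\lambda\in[-\infty,\infty)$ such that $\lambda=\lim_{n\to\infty}\frac1n\ln\|S^{(n)}(\omega)\|$ for a.e. $\omega$ (it exists when $\ln^+\|S(\cdot)\|\in L_1$). A vector is positive if all its coordinates are positive. *)

From HB Require Import structures.
From mathcomp Require Import all_boot all_order all_algebra.
From mathcomp Require Import all_classical all_reals all_analysis.
Set Implicit Arguments. Unset Strict Implicit. Unset Printing Implicit Defensive.
Import Order.TTheory GRing.Theory Num.Theory.
Import numFieldNormedType.Exports.
Local Open Scope classical_set_scope.
Local Open Scope ring_scope.

Definition vnorm (R : realType) (N : nat) (v : 'cV[R]_N) : R :=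
  Num.sqrt (\sum_(i < N) v i ord0 ^+ 2).

Definition mnorm (R : realType) (m n : nat) (M : 'M[R]_(m, n)) : R :=
  Num.sqrt (\sum_(i < m) \sum_(j < n) M i j ^+ 2).

Definition lnplus (R : realType) (x : R) : R := Num.max 0 (ln x).

Definition pos_vec (R : realType) (N : nat) (v : 'cV[R]_N) : Prop :=
  forall i, 0 < v i ord0.

Definition automorphism (d : measure_display) (T : measurableType d)
  (R : realType) (P : probability T R) (theta : T -> T) : Prop :=
  exists thetainv : T -> T,
    [/\ cancel theta thetainv, cancel thetainv theta,
        measurable_fun setT theta, measurable_fun setT thetainv &
        forall A, measurable A -> P (theta @^-1` A) = P A].

Definition ergodic (d : measure_display) (T : measurableType d)
  (R : realType) (P : probability T R) (theta : T -> T) : Prop :=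
  forall A, measurable A -> theta @^-1` A = A -> P A = 0%E \/ P A = 1%E.

Definition Smat (R : realType) (T : Type) (N : nat) (A : 'M[R]_N)
  (dd : T -> 'I_N -> R) (w : T) : 'M[R]_N :=
  A *m diag_mx (\row_i dd w i).

Fixpoint Scocycle (R : realType) (T : Type) (N : nat) (S : T -> 'M[R]_N)
  (theta : T -> T) (n : nat) (w : T) : 'M[R]_N :=
  match n with
  | 0 => 1%:M
  | k.+1 => S (iter k theta w) *m Scocycle S theta k w
  end.

Definition dmax (R : realType) (T : Type) (N : nat) (dd : T -> 'I_N -> R) (w : T) : R :=
  \big[Num.max/0]_(i < N) dd w i.

(* Let r > 0 bound the ratios A k j / A i j of entries in a common column.
   Then for every positive diagonal D, the map x |-> A D x contracts the
   oscillation of the ratio between two positive vectors by the factor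
   q = 1 - r^2 < 1, uniformly in D.  Hence the normalized backward products
   S(theta^-1 w) ... S(theta^-n w) 1 converge geometrically to a positive
   direction v(w), measurable in w, with coordinates bounded below by r/N;
   feeding one more factor S(w) through the limit gives S(w) v(w) // v(theta w).
   Being comparable to the all-ones vector, v(w) makes |S^(n)(w) v(w)| stay
   within constant factors of |S^(n)(w)|, so both grow at the rate lam.  The
   set Omega0 consists of the points whose two-sided orbit avoids the null set
   where the Lyapunov limit fails. *)

From HB Require Import structures.
From mathcomp Require Import all_boot all_order all_algebra.
From mathcomp Require Import all_classical all_reals all_analysis.
From mathcomp Require Import measurable_realfun ring lra.
Set Implicit Arguments. Unset Strict Implicit. Unset Printing Implicit Defensive.
Import Order.TTheory GRing.Theory Num.Theory.
Import numFieldNormedType.Exports.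
Local Open Scope classical_set_scope.
Local Open Scope ring_scope.

Section PositiveMatrix.
Variables (R : realType) (N : nat) (A : 'M[R]_N).

Definition positive (x : 'I_N -> R) := forall i, 0 < x i.
Definition nonneg (x : 'I_N -> R) := forall i, 0 <= x i.

Definition mulAD (e x : 'I_N -> R) : 'I_N -> R := fun i => \sum_j A i j * e j * x j.

Fixpoint backprod (e : nat -> 'I_N -> R) n x : 'I_N -> R :=
  if n is n.+1 then mulAD (e 0%N) (backprod (fun k => e k.+1) n x) else x.

Definition sandwiched (m M : R) (x y : 'I_N -> R) :=
  forall i, m * y i <= x i <= M * y i.

Definition normalize (x : 'I_N -> R) : 'I_N -> R := fun i => x i / \sum_k x k.

Definition econs (d0 : 'I_N -> R) (e : nat -> 'I_N -> R) : nat -> 'I_N -> R :=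
  fun k => if k is k.+1 then e k else d0.

Lemma mulAD_linear e a x b y i :
  mulAD e (fun j => a * x j + b * y j) i = a * mulAD e x i + b * mulAD e y i.
Proof. by rewrite /mulAD !mulr_sumr -big_split; apply: eq_bigr => j _ /=; ring. Qed.

Lemma mulADZ e c x i : mulAD e (fun j => c * x j) i = c * mulAD e x i.
Proof. by rewrite /mulAD mulr_sumr; apply: eq_bigr => j _; ring. Qed.

Lemma backprodD n p e x :
  backprod e (n + p) x = backprod e n (backprod (fun k => e (n + k)%N) p x).
Proof. by elim: n e => [|n IH] e //=; rewrite IH. Qed.

Lemma normalizeZ c x i : 0 < c -> normalize (fun j => c * x j) i = normalize x i.
Proof.
by move=> c0; rewrite /normalize -mulr_sumr invfM mulrACA mulfV ?mul1r // gt_eqF.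
Qed.

Lemma sum_ge_term (f : 'I_N -> R) k : nonneg f -> f k <= \sum_j f j.
Proof. by move=> f0; rewrite (bigD1 k) //= lerDl; apply: sumr_ge0 => j _. Qed.

Lemma normalize_le1 x i : positive x -> normalize x i <= 1.
Proof.
move=> x0; have x0' : nonneg x by move=> j; exact/ltW.
have S0 : 0 < \sum_j x j by apply: lt_le_trans (x0 i) (sum_ge_term _ x0').
by rewrite /normalize ler_pdivrMr ?mul1r // sum_ge_term.
Qed.

Variable i0 : 'I_N.

Lemma sum_gt0 (f : 'I_N -> R) : positive f -> 0 < \sum_j f j.
Proof.
move=> f0; apply: (lt_le_trans (f0 i0)); apply: sum_ge_term => j; exact/ltW.
Qed.

Hypothesis A_gt0 : forall i j, 0 < A i j.

Lemma mulAD_positive e x : positive e -> positive x -> positive (mulAD e x).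
Proof. by move=> e0 x0 i; apply: sum_gt0 => j; rewrite !mulr_gt0. Qed.

Lemma mulAD_nonneg e x : positive e -> nonneg x -> nonneg (mulAD e x).
Proof.
by move=> e0 x0 i; apply: sumr_ge0 => j _; rewrite mulr_ge0 // ltW ?mulr_gt0.
Qed.

Lemma backprod_positive e n x :
  (forall k, positive (e k)) -> positive x -> positive (backprod e n x).
Proof. by elim: n e => [|n IH] e e0 x0 //=; apply: mulAD_positive => //; exact: IH. Qed.

Variable r : R.
Hypothesis r_gt0 : 0 < r.
Hypothesis A_ratio : forall i k j, r * A k j <= A i j.

Lemma r_le1 : r <= 1.
Proof. by rewrite -(ler_pM2r (A_gt0 i0 i0)) mul1r A_ratio. Qed.

Lemma mulAD_ratio e u i k : positive e -> nonneg u -> r * mulAD e u k <= mulAD e u i.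
Proof.
move=> e0 u0; rewrite /mulAD mulr_sumr; apply: ler_sum => j _.
by rewrite !mulrA ler_wpM2r // ler_wpM2r ?A_ratio // ltW.
Qed.

Lemma mulAD_cross_ratio e u y i k : positive e -> nonneg u -> positive y ->
  r ^+ 2 * (mulAD e u k / mulAD e y k) * mulAD e y i <= mulAD e u i.
Proof.
move=> e0 u0 y0; have y'0 := mulAD_positive e0 y0.
have u'k := mulAD_nonneg e0 u0 k.
rewrite (_ : _ * _ = (r * mulAD e u k) * (r * mulAD e y i) / mulAD e y k); last first.
  by field; rewrite gt_eqF.
rewrite ler_pdivrMr //.
have y0' : nonneg y by move=> j; exact/ltW.
by apply: ler_pM; rewrite ?mulr_ge0 ?mulAD_ratio ?(ltW r_gt0) ?(ltW (y'0 i)).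
Qed.

Let q := 1 - r ^+ 2.

Lemma q_ge0 : 0 <= q.
Proof. by rewrite subr_ge0 exprn_ile1 ?r_le1 ?ltW. Qed.

Lemma q_lt1 : q < 1.
Proof. by rewrite ltrBlDr ltrDl exprn_gt0. Qed.

(* Apply the ratio bound to the nonnegative vectors x - m y and M y - x. *)
Lemma mulAD_sandwich_contract e x y m M :
  positive e -> positive y -> sandwiched m M x y ->
  exists m' M', [/\ m <= m', M' - m' <= q * (M - m) &
    sandwiched m' M' (mulAD e x) (mulAD e y)].
Proof.
move=> e0 y0 xy.
pose u j := 1 * x j + (- m) * y j; pose v j := M * y j + (- 1) * x j.
have u0 : nonneg u by move=> j; case/andP: (xy j) => h1 h2; rewrite /u; lra.
have v0 : nonneg v by move=> j; case/andP: (xy j) => h1 h2; rewrite /v; lra.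
have uE i : mulAD e u i = mulAD e x i - m * mulAD e y i by rewrite mulAD_linear; ring.
have vE i : mulAD e v i = M * mulAD e y i - mulAD e x i by rewrite mulAD_linear; ring.
have y'0 : 0 < mulAD e y i0 by exact: mulAD_positive.
pose a := mulAD e u i0 / mulAD e y i0; pose b := mulAD e v i0 / mulAD e y i0.
have a0 : 0 <= a by rewrite divr_ge0 ?(ltW y'0) // mulAD_nonneg.
have b0 : 0 <= b by rewrite divr_ge0 ?(ltW y'0) // mulAD_nonneg.
have ab : a + b = M - m by rewrite /a /b uE vE; field; rewrite gt_eqF.
exists (m + r ^+ 2 * a), (M - r ^+ 2 * b); split.
- by rewrite lerDl mulr_ge0 ?sqr_ge0.
- have -> : M - r ^+ 2 * b - (m + r ^+ 2 * a) = M - m - r ^+ 2 * (a + b) by ring.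
  by rewrite ab /q; lra.
move=> i; have := mulAD_cross_ratio i i0 e0 u0 y0.
have := mulAD_cross_ratio i i0 e0 v0 y0.
by rewrite -/a -/b uE vE => hv hu; apply/andP; split; lra.
Qed.

Let K := (r ^+ 4)^-1 - 1.

Lemma K_ge0 : 0 <= K.
Proof. by rewrite subr_ge0 invf_ge1 ?exprn_gt0 // exprn_ile1 ?r_le1 ?ltW. Qed.

Lemma mulAD_sandwich e x y : positive e -> positive x -> positive y ->
  exists m M, [/\ 0 < m, M - m <= m * K & sandwiched m M (mulAD e x) (mulAD e y)].
Proof.
move=> e0 x0 y0; have x'0 := mulAD_positive e0 x0; have y'0 := mulAD_positive e0 y0.
have r2 : 0 < r ^+ 2 by exact: exprn_gt0.
pose c := mulAD e x i0 / mulAD e y i0.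
have c0 : 0 < c by exact: divr_gt0.
exists (r ^+ 2 * c), (c / r ^+ 2); split.
- exact: mulr_gt0.
- by rewrite le_eqVlt /K; apply/orP; left; apply/eqP; field; rewrite gt_eqF.
move=> i; apply/andP; split; first exact: mulAD_cross_ratio i i0 e0 (fun j => ltW (x0 j)) y0.
have := mulAD_cross_ratio i i0 e0 (fun j => ltW (y0 j)) x0.
set yr := _ * _ * _ => h.
have -> : c / r ^+ 2 * mulAD e y i =
    mulAD e x i + (mulAD e y i - yr) * (mulAD e x i0 / (mulAD e y i0 * r ^+ 2)).
  by rewrite /yr /c; field; rewrite !gt_eqF.
by rewrite lerDl mulr_ge0 ?subr_ge0 // ltW // divr_gt0 ?mulr_gt0.
Qed.

Lemma backprod_sandwich n e x y :
  (forall k, positive (e k)) -> positive x -> positive y ->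
  exists m M, [/\ 0 < m, M - m <= m * K * q ^+ n &
    sandwiched m M (backprod e n.+1 x) (backprod e n.+1 y)].
Proof.
elim: n e => [|n IH] e e0 x0 y0.
  have [m [M [m0 hM xy]]] := mulAD_sandwich (e0 0%N) x0 y0.
  by exists m, M; rewrite expr0 mulr1.
have [m [M [m0 hM xy]]] := IH (fun k => e k.+1) (fun k => e0 k.+1) x0 y0.
have [m' [M' [mm' hM' xy']]] := mulAD_sandwich_contract (e0 0%N)
  (backprod_positive n.+1 (fun k => e0 k.+1) y0) xy.
exists m', M'; split => //; first exact: lt_le_trans mm'.
apply: (le_trans hM'); rewrite exprS mulrCA; apply: ler_wpM2l; first exact: q_ge0.
apply: (le_trans hM); rewrite -!mulrA; apply: ler_wpM2r => //.
by rewrite mulr_ge0 ?K_ge0 ?exprn_ge0 ?q_ge0.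
Qed.

Lemma normalize_dist x y m M i : positive x -> positive y -> 0 < m ->
  sandwiched m M x y -> `|normalize x i - normalize y i| <= (M - m) / m.
Proof.
move=> x0 y0 m0 xy.
have Sx0 := sum_gt0 x0; have Sy0 := sum_gt0 y0.
set Sx := \sum_k x k in Sx0 *; set Sy := \sum_k y k in Sy0 *.
have Sxl : m * Sy <= Sx by rewrite mulr_sumr; apply: ler_sum => j _; case/andP: (xy j).
have Sxu : Sx <= M * Sy by rewrite mulr_sumr; apply: ler_sum => j _; case/andP: (xy j).
have a1 := normalize_le1 i x0; have b1 := normalize_le1 i y0.
rewrite /normalize -/Sx -/Sy in a1 b1 *.
set a := x i / Sx in a1 *; set b := y i / Sy in b1 *.
have xa : x i = a * Sx by rewrite /a mulfVK // gt_eqF.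
have yb : y i = b * Sy by rewrite /b mulfVK // gt_eqF.
have a0 : 0 <= a by rewrite divr_ge0 // ltW.
have b0 : 0 <= b by rewrite divr_ge0 // ltW.
case/andP: (xy i); rewrite xa yb => h1 h2.
have e1 : a * m <= M * b.
  by rewrite -(ler_pM2r Sy0) -mulrA -[M * b * Sy]mulrA (le_trans _ h2) // ler_wpM2l.
have e2 : m * b <= a * M.
  by rewrite -(ler_pM2r Sy0) -mulrA -[a * M * Sy]mulrA (le_trans h1) // ler_wpM2l.
have mM : m <= M by rewrite -(ler_pM2r (y0 i)) yb (le_trans h1 h2).
rewrite ler_norml lerNl opprB !ler_pdivlMr //.
by apply/andP; split; nra.
Qed.

Definition perron_seq e i n := normalize (backprod e n (fun=> 1)) i.

Definition perron e i := lim (perron_seq e i @ \oo).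

Lemma ones_positive : positive (fun=> 1).
Proof. by move=> i; exact: ltr01. Qed.

Lemma perron_seq_cauchy e k p i : (forall k, positive (e k)) ->
  `|perron_seq e i (k.+1 + p) - perron_seq e i k.+1| <= K * q ^+ k.
Proof.
move=> e0; rewrite /perron_seq backprodD.
have z0 := backprod_positive p (fun n => e0 (k.+1 + n)%N) ones_positive.
have [m [M [m0 hM xy]]] := backprod_sandwich k e0 z0 ones_positive.
apply: (le_trans (normalize_dist i (backprod_positive _ e0 z0)
  (backprod_positive _ e0 ones_positive) m0 xy)).
by rewrite ler_pdivrMr // mulrC mulrA.
Qed.

Lemma dim_gt0 : (0 : R) < N%:R.
Proof. by rewrite ltr0n; case: (N) i0 => [[]|]. Qed.

Lemma perron_seq_lb e n i : (forall k, positive (e k)) ->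
  r / N%:R <= perron_seq e i n.+1.
Proof.
move=> e0; rewrite /perron_seq /=.
set z := backprod _ n _; have z0 : nonneg z.
  by move=> j; apply/ltW/backprod_positive => //; exact: ones_positive.
have S0 := sum_gt0 (mulAD_positive (e0 0%N)
  (backprod_positive n (fun k => e0 k.+1) ones_positive)).
rewrite /normalize ler_pdivlMr // mulrAC ler_pdivrMr; last exact: dim_gt0.
have : \sum_k r * mulAD (e 0%N) z k <= \sum_(k < N) mulAD (e 0%N) z i.
  by apply: ler_sum => k _; exact: mulAD_ratio.
by rewrite -mulr_sumr sumr_const card_ord mulr_natr.
Qed.

Lemma perron_seq_cvg e i : (forall k, positive (e k)) ->
  perron_seq e i @ \oo --> perron e i.
Proof.
move=> e0; apply: cauchy_cvg; apply: cauchy_exP => eps eps0.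
have q1 : `|q| < 1 by rewrite ger0_norm ?q_lt1 ?q_ge0.
have K1 : 0 < K + 1 by have := K_ge0; lra.
have [k _ hk] := cvgr0_norm_lt _ (cvg_expr q1) _ (divr_gt0 eps0 K1).
exists (perron_seq e i k.+1), k.+1 => // n /= kn.
rewrite -ball_normE /ball_ /= -(subnKC kn) distrC.
apply: (le_lt_trans (perron_seq_cauchy _ _ _ e0)).
have := hk k (leqnn k); rewrite /= ger0_norm ?exprn_ge0 ?q_ge0 // ltr_pdivlMr // => h.
apply: le_lt_trans h; rewrite mulrDr mulr1 mulrC lerDl.
by rewrite exprn_ge0 ?q_ge0.
Qed.

Lemma perron_lb e i : (forall k, positive (e k)) -> r / N%:R <= perron e i.
Proof.
move=> e0; apply: limr_ge; first exact: perron_seq_cvg.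
by exists 1%N => // -[|n] //= _; exact: perron_seq_lb.
Qed.

Lemma perron_positive e : (forall k, positive (e k)) -> positive (perron e).
Proof. by move=> e0 i; apply: lt_le_trans (perron_lb i e0); rewrite divr_gt0 ?dim_gt0. Qed.

Lemma mulAD_cvg e (z : nat -> 'I_N -> R) (l : 'I_N -> R) i :
  (forall j, z ^~ j @ \oo --> l j) -> (fun n => mulAD e (z n) i) @ \oo --> mulAD e l i.
Proof.
move=> zl; apply: (@cvg_big _ _ +%R 0 xpredT add_continuous) => j _.
exact: cvgM (cvg_cst _) (zl j).
Qed.

(* By scale invariance of [normalize], the (n+1)-st term of the sequence for
   [econs d0 e] is [normalize (mulAD d0 _)] of the n-th term for [e]. *)
Lemma perron_econs d0 e : positive d0 -> (forall k, positive (e k)) ->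
  perron (econs d0 e) = normalize (mulAD d0 (perron e)).
Proof.
move=> d00 e0; apply/funext => i; apply: cvg_lim => //; rewrite -cvg_shiftS.
have seqE n : perron_seq (econs d0 e) i n.+1 =
    normalize (mulAD d0 (fun j => perron_seq e j n)) i.
  have S0 : 0 < (\sum_j backprod e n (fun=> 1) j)^-1.
    by rewrite invr_gt0; exact: sum_gt0 (backprod_positive n e0 ones_positive).
  rewrite /perron_seq /= -(normalizeZ _ _ S0).
  congr normalize; apply/funext => k; rewrite -mulADZ.
  by congr mulAD; apply/funext => j; rewrite /normalize mulrC.
rewrite (_ : [sequence _]_n = fun n => normalize (mulAD d0 (fun j => perron_seq e j n)) i).
  2: by apply/funext => n; exact: seqE.
have l0 := sum_gt0 (mulAD_positive d00 (perron_positive e0)).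
apply: cvgM; first by apply: mulAD_cvg => j; exact: perron_seq_cvg.
apply: cvgV; first by rewrite gt_eqF.
apply: (@cvg_big _ _ +%R 0 xpredT add_continuous) => k _.
by apply: mulAD_cvg => j; exact: perron_seq_cvg.
Qed.

End PositiveMatrix.

Lemma column_ratio_bound (R : realType) (N : nat) (A : 'M[R]_N) :
  (forall i j, 0 < A i j) -> exists2 r : R, 0 < r & forall i k j, r * A k j <= A i j.
Proof.
move=> A_gt0.
pose Si := \sum_i \sum_j (A i j)^-1; pose Ss := \sum_i \sum_j A i j.
have term_le (F : 'I_N -> 'I_N -> R) i j : (forall i j, 0 <= F i j) ->
    F i j <= \sum_i \sum_j F i j.
  move=> F0; apply: le_trans (sum_ge_term j (F0 i)) (sum_ge_term i _) => a.
  exact: sumr_ge0.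
have Si0 : 0 <= Si by rewrite !sumr_ge0 // => i _; rewrite sumr_ge0 // => j _; rewrite invr_ge0 ltW.
have Ss0 : 0 <= Ss by rewrite !sumr_ge0 // => i _; rewrite sumr_ge0 // => j _; rewrite ltW.
exists (Si * Ss + 1)^-1; first by rewrite invr_gt0 ltr_wpDl ?mulr_ge0.
move=> i k j; rewrite mulrC ler_pdivrMr ?ltr_wpDl ?mulr_ge0 //.
have h1 : A k j <= Ss by apply: term_le => a b; rewrite ltW.
have h2 : (A i j)^-1 <= Si by apply: (term_le (fun a b => (A a b)^-1)) => a b; rewrite invr_ge0 ltW.
have h3 : 1 <= A i j * Si.
  by rewrite -(divff (lt0r_neq0 (A_gt0 i j))); apply: ler_wpM2l => //; exact: ltW.
by have := A_gt0 i j; nra.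
Qed.

Lemma sum_sqr_le_sqr_sum (R : realType) (I : Type) (s : seq I) (a : I -> R) :
  (forall j, 0 <= a j) -> \sum_(j <- s) a j ^+ 2 <= (\sum_(j <- s) a j) ^+ 2.
Proof.
move=> a0; elim: s => [|x s IH]; first by rewrite !big_nil expr0n.
rewrite !big_cons sqrrD.
have s0 : 0 <= \sum_(j <- s) a j by exact: sumr_ge0.
have : 0 <= a x * (\sum_(j <- s) a j) *+ 2 by rewrite mulrn_wge0 ?mulr_ge0.
lra.
Qed.

Section EuclideanNorms.
Variables (R : realType) (N : nat).
Implicit Types (x : 'I_N -> R) (v : 'cV[R]_N).

Definition colv x : 'cV[R]_N := \col_i x i.

Definition unitv x : 'cV[R]_N := (vnorm (colv x))^-1 *: colv x.

Lemma vnormZ c v : 0 <= c -> vnorm (c *: v) = c * vnorm v.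
Proof.
move=> c0; rewrite /vnorm (eq_bigr (fun i => c ^+ 2 * v i ord0 ^+ 2)).
  by rewrite -mulr_sumr sqrtrM ?sqr_ge0 // sqrtr_sqr ger0_norm.
by move=> i _; rewrite mxE exprMn.
Qed.

Lemma vnorm_ge_entry v i : `|v i ord0| <= vnorm v.
Proof.
rewrite -sqrtr_sqr /vnorm ler_sqrt; last by rewrite sumr_ge0 // => j _; exact: sqr_ge0.
by apply: (sum_ge_term i) => j; exact: sqr_ge0.
Qed.

Lemma vnorm_gt0 v i : 0 < v i ord0 -> 0 < vnorm v.
Proof. by move=> vi; apply: lt_le_trans (vnorm_ge_entry v i); rewrite normr_gt0 gt_eqF. Qed.

Lemma vnorm_colv_gt0 x (i : 'I_N) : positive x -> 0 < vnorm (colv x).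
Proof. by move=> x0; apply: (@vnorm_gt0 _ i); rewrite mxE. Qed.

Lemma unitv_positive x : positive x -> pos_vec (unitv x).
Proof.
move=> x0 i; rewrite !mxE mulr_gt0 // invr_gt0 (@vnorm_gt0 _ i) // mxE; exact: x0.
Qed.

Lemma vnorm_unitv x (i : 'I_N) : positive x -> vnorm (unitv x) = 1.
Proof.
move=> x0; have n0 := vnorm_colv_gt0 i x0.
by rewrite vnormZ ?invr_ge0 ?ltW // mulVf ?gt_eqF.
Qed.

Lemma unitv_bounds x c j : positive x -> (forall i, c <= x i) ->
  c / vnorm (colv x) <= unitv x j ord0 <= 1.
Proof.
move=> x0 cx; have n0 := vnorm_colv_gt0 j x0.
rewrite !mxE; apply/andP; split; first by rewrite mulrC ler_pM2l ?invr_gt0.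
rewrite mulrC ler_pdivrMr // mul1r.
by have := vnorm_ge_entry (colv x) j; rewrite mxE ger0_norm // ltW.
Qed.

Lemma unitv_normalize x (i : 'I_N) : positive x -> unitv (normalize x) = unitv x.
Proof.
move=> x0; have S0 : 0 < (\sum_k x k)^-1 by rewrite invr_gt0 (sum_gt0 i).
have cE : colv (normalize x) = (\sum_k x k)^-1 *: colv x.
  by apply/matrixP => k l; rewrite !mxE mulrC.
by rewrite /unitv cE vnormZ ?ltW // invfM scalerA mulrAC mulVf ?gt_eqF ?mul1r.
Qed.

End EuclideanNorms.

Lemma ln_sandwich (R : realType) (a b c C : R) : 0 < a -> 0 < c ->
  c * a <= b <= C * a -> `|ln b - ln a| <= `|ln c| + `|ln C|.
Proof.
move=> a0 c0 /andP[cab bCa]; have C0 : 0 < C.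
  by rewrite -(pmulr_rgt0 _ a0) mulrC (lt_le_trans _ (le_trans cab bCa)) ?mulr_gt0.
have b0 : 0 < b by apply: lt_le_trans cab; rewrite mulr_gt0.
have lo : ln c + ln a <= ln b by rewrite -lnM ?posrE // ler_ln ?posrE ?mulr_gt0.
have hi : ln b <= ln C + ln a by rewrite -lnM ?posrE // ler_ln ?posrE ?mulr_gt0.
have := ler_norm (ln C); have := ler_norm (- ln c); rewrite normrN.
have := normr_ge0 (ln c); have := normr_ge0 (ln C).
by rewrite ler_norml => *; apply/andP; split; lra.
Qed.

Lemma cvg_invn (R : realType) : (fun n : nat => n%:R^-1 : R) @ \oo --> 0.
Proof. by rewrite -cvg_shiftS; exact: cvg_harmonic. Qed.

Lemma lyapunov_comparable (R : realType) (f g : nat -> R) (lam : \bar R) c C :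
  0 < c -> (forall n, (0 < n)%N -> 0 < f n /\ c * f n <= g n <= C * f n) ->
  (fun n => (n%:R^-1 * ln (f n))%:E) @ \oo --> lam ->
  (fun n => (n%:R^-1 * ln (g n))%:E) @ \oo --> lam.
Proof.
move=> c0 fg flam; set B := `|ln c| + `|ln C|.
pose h n := n%:R^-1 * (ln (g n) - ln (f n)).
have hB : \forall n \near \oo, - (B * n%:R^-1) <= h n <= B * n%:R^-1.
  exists 1%N => // n /= n0; have [f0 fgn] := fg n n0.
  rewrite -ler_norml /h normrM ger0_norm ?invr_ge0 // mulrC.
  by rewrite ler_wpM2r ?invr_ge0 // ln_sandwich.
have Bn0 : (fun n => B * n%:R^-1) @ \oo --> 0.
  by rewrite -(mulr0 B); apply: cvgM; [exact: cvg_cst | exact: cvg_invn].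
have h0 : h @ \oo --> 0.
  by apply: (squeeze_cvgr hB _ Bn0); rewrite -oppr0; exact: cvgN.
have -> : (fun n => (n%:R^-1 * ln (g n))%:E) =
    (fun n => ((n%:R^-1 * ln (f n))%:E + (h n)%:E)%E).
  by apply/funext => n; rewrite -EFinD /h; congr EFin; ring.
rewrite -(adde0 lam); apply: cvgeD; [exact: fin_num_adde_defl | exact: flam |].
apply: cvg_EFin h0; exact: nearW.
Qed.

Section MatrixNorms.
Variables (R : realType) (N : nat).
Implicit Types (M : 'M[R]_N) (v : 'cV[R]_N).

Lemma mnorm_ge_entry M i j : M i j <= mnorm M.
Proof.
apply: le_trans (ler_norm _) _; rewrite -sqrtr_sqr /mnorm ler_sqrt; last first.
  by rewrite !sumr_ge0 // => a _; rewrite sumr_ge0 // => b _; exact: sqr_ge0.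
have sq0 a : nonneg (fun b => M a b ^+ 2) by move=> b; exact: sqr_ge0.
apply: le_trans (sum_ge_term j (sq0 i)) (sum_ge_term i _) => a.
by apply: sumr_ge0 => b _; exact: sq0.
Qed.

Lemma vnorm_mulmx_ge M v c : (forall i j, 0 <= M i j) -> 0 <= c ->
  (forall j, c <= v j ord0) -> c * mnorm M <= vnorm (M *m v).
Proof.
move=> M0 c0 cv; rewrite /mnorm /vnorm -(ger0_norm c0) -sqrtr_sqr -sqrtrM ?sqr_ge0 //.
rewrite ler_sqrt; last by rewrite sumr_ge0 // => i _; exact: sqr_ge0.
rewrite mulr_sumr; apply: ler_sum => i _.
have Mi0 : 0 <= \sum_j M i j by exact: sumr_ge0.
apply: (@le_trans _ _ ((c * \sum_j M i j) ^+ 2)).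
  by rewrite exprMn ler_wpM2l ?sqr_ge0 // sum_sqr_le_sqr_sum.
rewrite ler_sqr ?nnegrE ?mulr_ge0 //; last first.
  by rewrite mxE sumr_ge0 // => j _; rewrite mulr_ge0 // (le_trans c0).
by rewrite mxE mulr_sumr; apply: ler_sum => j _; rewrite mulrC ler_wpM2l.
Qed.

Lemma vnorm_mulmx_le M v : (forall i j, 0 <= M i j) ->
  (forall j, 0 <= v j ord0 <= 1) -> vnorm (M *m v) <= N%:R * N%:R * mnorm M.
Proof.
move=> M0 v01.
have Mv0 : nonneg (fun i => (M *m v) i ord0).
  move=> i; rewrite mxE sumr_ge0 // => j _; rewrite mulr_ge0 //.
  by case/andP: (v01 j).
apply: (@le_trans _ _ (\sum_i (M *m v) i ord0)).
  rewrite /vnorm -(ger0_norm (sumr_ge0 _ (fun i _ => Mv0 i))) -sqrtr_sqr ler_sqrt ?sqr_ge0 //.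
  exact: sum_sqr_le_sqr_sum.
apply: (@le_trans _ _ (\sum_(i < N) \sum_(j < N) mnorm M)); last first.
  by rewrite !sumr_const !card_ord -mulrnA -[mnorm M *+ _]mulr_natl natrM.
apply: ler_sum => i _; rewrite mxE; apply: ler_sum => j _.
apply: le_trans (mnorm_ge_entry M i j).
by case/andP: (v01 j) => _ v1; rewrite -[leRHS]mulr1 ler_wpM2l.
Qed.

Lemma lyapunov_mulmx (i0 : 'I_N) (M : nat -> 'M[R]_N) v c (lam : \bar R) :
  0 < c -> (forall j, c <= v j ord0 <= 1) -> (forall n i j, 0 < M n.+1 i j) ->
  (fun n => (n%:R^-1 * ln (mnorm (M n)))%:E) @ \oo --> lam ->
  (fun n => (n%:R^-1 * ln (vnorm (M n *m v)))%:E) @ \oo --> lam.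
Proof.
move=> c0 cv M0; apply: (lyapunov_comparable (C := N%:R * N%:R) c0) => -[//|n] _.
have M0' i j : 0 <= M n.+1 i j by exact/ltW.
split; first exact: lt_le_trans (M0 n i0 i0) (mnorm_ge_entry _ i0 i0).
rewrite vnorm_mulmx_ge ?vnorm_mulmx_le ?(ltW c0) // => j; case/andP: (cv j) => // cvj ->.
by rewrite andbT (le_trans (ltW c0)).
Qed.

End MatrixNorms.

Section Cocycle.
Variables (R : realType) (T : Type) (N : nat) (i0 : 'I_N).

Lemma Scocycle_gt0 (S : T -> 'M[R]_N) theta w :
  (forall w i j, 0 < S w i j) -> forall n i j, 0 < Scocycle S theta n.+1 w i j.
Proof.
move=> S0; elim=> [|n IH] i j /=; first by rewrite mulmx1.
by rewrite mxE (sum_gt0 i0) // => k; rewrite mulr_gt0.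
Qed.

Variables (A : 'M[R]_N) (dd : T -> 'I_N -> R).

Lemma Smat_mulmx w x : Smat A dd w *m colv x = colv (mulAD A (dd w) x).
Proof.
apply/matrixP => i j; rewrite !mxE; apply: eq_bigr => k _.
by rewrite /Smat mul_mx_diag !mxE.
Qed.

Hypotheses (A_gt0 : forall i j, 0 < A i j) (dd_gt0 : forall w i, 0 < dd w i).

Lemma Smat_gt0 w i j : 0 < Smat A dd w i j.
Proof. by rewrite /Smat mul_mx_diag !mxE mulr_gt0. Qed.

Lemma Smat_unitv w x : positive x ->
  Smat A dd w *m unitv x = (vnorm (colv (mulAD A (dd w) x)) / vnorm (colv x)) *:
    unitv (normalize (mulAD A (dd w) x)).
Proof.
move=> x0; have y0 := mulAD_positive i0 A_gt0 (dd_gt0 w) x0.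
have ny0 := vnorm_colv_gt0 i0 y0.
rewrite (unitv_normalize i0 y0) /unitv -scalemxAr Smat_mulmx scalerA.
by rewrite mulrAC mulfV ?gt_eqF ?mul1r.
Qed.

End Cocycle.

Section Measurability.
Context d (T : measurableType d) (R : realType).

Lemma measurable_iter (f : T -> T) k :
  measurable_fun setT f -> measurable_fun setT (iter k f).
Proof. by move=> mf; elim: k => [|k IH] /=; [exact: measurable_id | exact: measurableT_comp]. Qed.

Lemma measurable_funV_pos (f : T -> R) : measurable_fun setT f -> (forall w, 0 < f w) ->
  measurable_fun setT (fun w => (f w)^-1).
Proof.
move=> mf f0; change (measurable_fun setT ((@GRing.inv R) \o f)).
apply: (measurable_comp (F := (`]0, +oo[%classic : set R))) => //.
- by move=> _ [w _ <-]; rewrite /= in_itv /= andbT.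
- apply: open_continuous_measurable_fun; first exact: interval_open.
  move=> x; rewrite inE /= in_itv /= andbT => x0.
  by apply: continuousV; [rewrite gt_eqF | exact: cvg_id].
Qed.

Variable N : nat.

Lemma measurable_vnorm (x : T -> 'I_N -> R) :
  (forall i, measurable_fun setT (x ^~ i)) -> measurable_fun setT (fun w => vnorm (colv (x w))).
Proof.
move=> mx; apply: measurableT_comp; first exact: continuous_measurable_fun (@sqrt_continuous R).
apply: measurable_sum => i; under eq_fun do rewrite mxE expr2.
exact: measurable_funM.
Qed.

Variable A : 'M[R]_N.

Lemma measurable_backprod n (E : T -> nat -> 'I_N -> R) x i :
  (forall k j, measurable_fun setT (fun w => E w k j)) ->
  measurable_fun setT (fun w => backprod A (E w) n x i).
Proof.
elim: n E i => [|n IH] E i mE /=; first exact: measurable_cst.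
apply: measurable_sum => j; apply: measurable_funM; last exact: IH.
by apply: measurable_funM; [exact: measurable_cst | exact: mE].
Qed.

Variables (i0 : 'I_N) (r : R).
Hypotheses (A_gt0 : forall i j, 0 < A i j) (r_gt0 : 0 < r)
  (A_ratio : forall i k j, r * A k j <= A i j).
Variable E : T -> nat -> 'I_N -> R.
Hypotheses (E_meas : forall k j, measurable_fun setT (fun w => E w k j))
  (E_gt0 : forall w k, positive (E w k)).

Lemma measurable_perron i : measurable_fun setT (fun w => perron A (E w) i).
Proof.
apply: (measurable_fun_cvg (h := fun n w => perron_seq A (E w) i n)); last first.
  by move=> w _; exact: (perron_seq_cvg i0 A_gt0 r_gt0 A_ratio).
move=> n; apply: measurable_funM; first exact: measurable_backprod.
apply: measurable_funV_pos; first by apply: measurable_sum => k; exact: measurable_backprod.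
move=> w; apply: (sum_gt0 i0) => k.
exact: (backprod_positive i0 A_gt0 n (E_gt0 w) (@ones_positive R N) k).
Qed.

Lemma measurable_unitv_perron i :
  measurable_fun setT (fun w => unitv (perron A (E w)) i ord0).
Proof.
under eq_fun do rewrite !mxE mulrC.
apply: measurable_funM; first exact: measurable_perron.
apply: measurable_funV_pos; first exact/measurable_vnorm/measurable_perron.
by move=> w; apply: vnorm_colv_gt0 i _; exact: (perron_positive i0 A_gt0 r_gt0 A_ratio).
Qed.

End Measurability.

Section InvariantConull.
Context d (T : measurableType d) (R : realType) (P : probability T R).

Definition orbit_avoiding (theta thi : T -> T) (Nul : set T) : set T :=
  \bigcap_k (~` (iter k theta @^-1` Nul) `&` ~` (iter k thi @^-1` Nul)).

Variables (theta thi : T -> T) (Nul : set T).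

Lemma orbit_avoidingP w : orbit_avoiding theta thi Nul w <->
  forall k, ~ Nul (iter k theta w) /\ ~ Nul (iter k thi w).
Proof. by split => h k; [exact: h k I | move=> _; exact: h k]. Qed.

Lemma image_orbit_avoiding : cancel theta thi -> cancel thi theta ->
  theta @` orbit_avoiding theta thi Nul = orbit_avoiding theta thi Nul.
Proof.
move=> thK thiK; apply/seteqP; split.
  move=> _ [w /orbit_avoidingP wO <-]; apply/orbit_avoidingP => k; split.
    by rewrite -iterSr; exact: (wO k.+1).1.
  by case: k => [|k]; [exact: (wO 1%N).1 | rewrite iterSr thK; exact: (wO k).2].
move=> w /orbit_avoidingP wO; exists (thi w) => //; apply/orbit_avoidingP => k; split.
  by case: k => [|k]; [exact: (wO 1%N).2 | rewrite iterSr thiK; exact: (wO k).1].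
by rewrite -iterSr; exact: (wO k.+1).2.
Qed.

Lemma measurable_preimage_iter (f : T -> T) k A : measurable_fun setT f ->
  measurable A -> measurable (iter k f @^-1` A).
Proof. by move=> mf mA; have := measurable_iter k mf measurableT mA; rewrite setTI. Qed.

Lemma measure_preimage_iter (f : T -> T) : measurable_fun setT f ->
  (forall A, measurable A -> P (f @^-1` A) = P A) ->
  forall k A, measurable A -> P (iter k f @^-1` A) = P A.
Proof.
move=> mf fP; elim=> [|k IH] B mB //.
rewrite (_ : _ @^-1` _ = f @^-1` (iter k f @^-1` B)); last first.
  by apply/seteqP; split => x /=; rewrite -iterS iterSr.
by rewrite fP ?IH //; exact: measurable_preimage_iter.
Qed.

Hypotheses (mtheta : measurable_fun setT theta) (mthi : measurable_fun setT thi)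
  (mNul : measurable Nul).

Lemma measurable_orbit_avoiding : measurable (orbit_avoiding theta thi Nul).
Proof.
apply: bigcap_measurable => [|k _]; first by exists 0%N.
by apply: measurableI; apply: measurableC; exact: measurable_preimage_iter.
Qed.

Hypotheses (thetaP : forall A, measurable A -> P (theta @^-1` A) = P A)
  (thiP : forall A, measurable A -> P (thi @^-1` A) = P A).

Lemma orbit_avoiding_conull : P Nul = 0%E -> P (orbit_avoiding theta thi Nul) = 1%E.
Proof.
move=> PNul; have mO := measurable_orbit_avoiding.
have negC : P.-negligible (~` orbit_avoiding theta thi Nul).
  apply: (@negligibleS _ _ _ _
    (\bigcup_k ((iter k theta @^-1` Nul) `|` (iter k thi @^-1` Nul)))).
    move=> w wO; apply: contrapT => nU; apply: wO; apply/orbit_avoidingP => k.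
    by split => h; apply: nU; exists k => //; [left | right].
  apply: negligible_bigcup => k; apply: negligibleU.
    exists (iter k theta @^-1` Nul); split => //; first exact: measurable_preimage_iter.
    exact: eq_trans (measure_preimage_iter mtheta thetaP k mNul) PNul.
  exists (iter k thi @^-1` Nul); split => //; first exact: measurable_preimage_iter.
  exact: eq_trans (measure_preimage_iter mthi thiP k mNul) PNul.
have := probability_setC P mO; rewrite (negligibleP _ (measurableC mO)) in negC.
by rewrite negC => /esym/eqP; rewrite sube_eq ?fin_num_adde_defr // add0e => /eqP.
Qed.

End InvariantConull.

Lemma automorphism_invariant_conull d (T : measurableType d) (R : realType)
    (P : probability T R) (theta : T -> T) (Nul : set T) :
  automorphism P theta -> measurable Nul -> P Nul = 0%E ->
  exists2 Om : set T, [/\ measurable Om, theta @` Om = Om & P Om = 1%E] &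
    forall w, Om w -> ~ Nul w.
Proof.
move=> [thi [thK thiK mth mthi thP]] mNul PNul.
have thiP A : measurable A -> P (thi @^-1` A) = P A.
  move=> mA; have mA' : measurable (thi @^-1` A) by rewrite -[_ @^-1` _]setTI; exact: mthi.
  by rewrite -thP //; congr (P _); apply/seteqP; split => x /=; rewrite thK.
exists (orbit_avoiding theta thi Nul); last by move=> w /orbit_avoidingP /(_ 0%N) [].
by split; [exact: measurable_orbit_avoiding | exact: image_orbit_avoiding |
  exact: orbit_avoiding_conull].
Qed.

Lemma backward_orbit_econs (R : realType) (T : Type) (N : nat) (theta thi : T -> T)
    (dd : T -> 'I_N -> R) w : cancel theta thi ->
  (fun k => dd (iter k.+1 thi (theta w))) = econs (dd w) (fun k => dd (iter k.+1 thi w)).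
Proof. by move=> thK; apply/funext => -[|k]; rewrite /= ?thK // -!iterS iterSr thK. Qed.

Theorem proposition3p1 (d : measure_display) (T : measurableType d)
  (R : realType) (P : probability T R) (theta : T -> T)
  (N : nat) (A : 'M[R]_N) (dd : T -> 'I_N -> R) (lam : \bar R) :
  (0 < N)%N ->
  automorphism P theta ->
  ergodic P theta ->
  (forall i j, 0 < A i j) ->
  (forall i, measurable_fun setT (fun w => dd w i)) ->
  (forall w i, 0 < dd w i) ->
  P.-integrable setT (fun w => (lnplus (dmax dd w))%:E) ->
  (* lam is the top Lyapunov exponent of S = A D *)
  {ae P, forall w, ((fun n : nat =>
      ((n%:R)^-1 * ln (mnorm (Scocycle (Smat A dd) theta n w)))%:E)
      @ \oo --> lam)} ->
  exists (Omega0 : set T) (wv : T -> 'cV[R]_N) (rho : T -> R),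
    [/\ measurable Omega0, theta @` Omega0 = Omega0, P Omega0 = 1%E &
        (forall i, measurable_fun Omega0 (fun w => wv w i ord0))] /\
    [/\
        (forall w, Omega0 w -> pos_vec (wv w) /\ vnorm (wv w) = 1),
        (forall w, Omega0 w -> 0 < rho w),
        (forall w, Omega0 w -> Smat A dd w *m wv w = rho w *: wv (theta w)) &
        (forall w, Omega0 w ->
           (fun n : nat =>
              ((n%:R)^-1 * ln (vnorm (Scocycle (Smat A dd) theta n w *m wv w)))%:E)
           @ \oo --> lam)].
Proof.
(* Ergodicity and the integrability of ln^+ max d_i only serve to make lam
   exist, and lam is given here. *)
move=> N_gt0 theta_aut _ A_gt0 dd_meas dd_gt0 _ [Nul [mNul PNul lyapNul]].
pose i0 := Ordinal N_gt0; have [r r_gt0 A_ratio] := column_ratio_bound A_gt0.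
have [Om [mOm thOm POm] OmNul] := automorphism_invariant_conull theta_aut mNul PNul.
have [thi [thK _ _ mthi _]] := theta_aut.
(* v w is the limit direction of S(thi w) S(thi^2 w) ... S(thi^n w) 1. *)
pose e w k := dd (iter k.+1 thi w); pose v w := perron A (e w).
have e_meas k j : measurable_fun setT (fun w => e w k j).
  exact: measurableT_comp (dd_meas j) (measurable_iter k.+1 mthi).
have e_gt0 w k : positive (e w k) by move=> j; exact: dd_gt0.
have v_gt0 w : positive (v w) := perron_positive i0 A_gt0 r_gt0 A_ratio (e_gt0 w).
have v_theta w : v (theta w) = normalize (mulAD A (dd w) (v w)).
  rewrite /v [e (theta w)](backward_orbit_econs dd w thK).
  exact: (perron_econs i0 A_gt0 r_gt0 A_ratio (dd_gt0 w) (e_gt0 w)).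
exists Om, (fun w => unitv (v w)),
  (fun w => vnorm (colv (mulAD A (dd w) (v w))) / vnorm (colv (v w))); split.
  split => // i; apply: measurable_funS
    (measurable_unitv_perron i0 A_gt0 r_gt0 A_ratio e_meas e_gt0 i) => //.
split => w Ow.
- by split; [exact: unitv_positive | exact: vnorm_unitv i0 _].
- by rewrite divr_gt0 // (vnorm_colv_gt0 i0) //; exact: mulAD_positive.
- by rewrite v_theta Smat_unitv.
apply: (lyapunov_mulmx i0 (c := r / N%:R / vnorm (colv (v w)))).
- by rewrite !divr_gt0 ?ltr0n // (vnorm_colv_gt0 i0).
- by move=> j; apply: unitv_bounds => // k; exact: perron_lb.
- by move=> n i j; apply: Scocycle_gt0 => // ? ? ?; exact: Smat_gt0.
by apply: contrapT => nlam; apply: (OmNul w Ow); exact: lyapNul.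
Qed.
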